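(* For any two stationary policies $\pi,\pi'$, $$\mathrm{KL}(\mu^\pi\|\mu^{\pi'})\le\frac1{1-\gamma}\mathcal H(\pi\|\pi').$$
   Context: Discounted MDP with finite state space $\mathcal X$, finite action space $\mathcal A$, transition kernel $P$, discount factor $\gamma\in(0,1)$ and initial distribution $\nu_0$. For a stationary policy $\pi$, $\nu^\pi(x)=(1-\gamma)\sum_{t\ge0}\gamma^t\mathbb P_\pi[X_t=x]$ (trajectory started at $X_0\sim\nu_0$, following $\pi$), $\mu^\pi(x,a)=\nu^\pi(x)\pi(a|x)$, and $\mathcal H(\pi\|\pi')=\sum_x\nu^\pi(x)\mathrm{KL}(\pi(\cdot|x)\|\pi'(\cdot|x))$. *)

From HB Require Import structures.
From mathcomp Require Import all_boot all_order all_algebra.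
From mathcomp Require Import all_classical all_reals all_analysis.
Set Implicit Arguments. Unset Strict Implicit. Unset Printing Implicit Defensive.
Import Order.TTheory GRing.Theory Num.Theory.
Import numFieldNormedType.Exports.
Local Open Scope ring_scope.

Section MDP.
Variable R : realType.

Definition is_dist (T : finType) (p : T -> R) : Prop :=
  (forall x, 0 <= p x) /\ \sum_(x : T) p x = 1.

Variables (X A : finType).

Fixpoint state_law (nu0 : X -> R) (P : X -> A -> X -> R) (pi : X -> A -> R)
    (t : nat) : X -> R :=
  match t with
  | 0%N => nu0
  | t'.+1 => fun y => \sum_(x : X) state_law nu0 P pi t' x *
                       \sum_(a : A) pi x a * P x a y
  end.

Definition state_occ (gamma : R) (nu0 : X -> R) (P : X -> A -> X -> R)
    (pi : X -> A -> R) (x : X) : R :=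
  (1 - gamma) * limn (series ((fun t => gamma ^+ t * state_law nu0 P pi t x) : R ^nat)).

Definition sa_occ (gamma : R) (nu0 : X -> R) (P : X -> A -> X -> R)
    (pi : X -> A -> R) (xa : X * A) : R :=
  state_occ gamma nu0 P pi xa.1 * pi xa.1 xa.2.

End MDP.

Local Open Scope ereal_scope.

Definition kl_term (R : realType) (p q : R) : \bar R :=
  if p == 0%R then 0
  else if q == 0%R then +oo
  else (p * ln (p / q))%:E.

Definition KL (R : realType) (T : finType) (p q : T -> R) : \bar R :=
  \sum_(x : T) kl_term (p x) (q x).

Definition cond_rel_ent (R : realType) (X A : finType) (gamma : R) (nu0 : X -> R)
    (P : X -> A -> X -> R) (pi pi' : X -> A -> R) : \bar R :=
  \sum_(x : X) (state_occ gamma nu0 P pi x)%:E * KL (pi x) (pi' x).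

From HB Require Import structures.
From mathcomp Require Import all_boot all_order all_algebra.
From mathcomp Require Import all_classical all_reals all_analysis.
From mathcomp Require Import ring lra.
Import Order.TTheory GRing.Theory Num.Theory.
Import numFieldNormedType.Exports.
Local Open Scope ring_scope.

Set Implicit Arguments. Unset Strict Implicit. Unset Printing Implicit Defensive.

(* Write nu, nu' for the state occupancies and mu, mu' for the state-action
   occupancies of pi, pi'.  The chain rule gives
   KL(mu||mu') = KL(nu||nu') + H(pi||pi').  Each occupancy satisfies the flow
   equation nu(y) = (1 - gamma) nu0(y) + gamma sum_(x,a) P(y|x,a) mu(x,a), so
   the log-sum inequality yields KL(nu||nu') <= gamma KL(mu||mu'), whence
   (1 - gamma) KL(mu||mu') <= H(pi||pi').  If pi(.|x) is not absolutely
   continuous w.r.t. pi'(.|x) at some x with nu(x) > 0, the right-hand side is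
   +oo.  Otherwise every state reachable under pi is reachable under pi', so
   nu << nu' and all the divergences involved are finite sums. *)

Lemma psumr_neq0E (R : numDomainType) (I : finType) (F : I -> R) :
  (forall i, 0 <= F i) -> (\sum_i F i != 0) = [exists i, F i != 0].
Proof.
move=> F0; rewrite psumr_neq0 //; apply/hasP/existsP => [[i _ /=]|[i Fi]].
  by rewrite lt_def => /andP[Fi _]; exists i.
by exists i; rewrite ?mem_index_enum // lt_def Fi F0.
Qed.

Section RelativeEntropyTerm.
Variable R : realType.
Implicit Types (p q c : R).

(* Meaningful only under [abs_cont p q]: for [p > 0 = q] it is the junk value
   [p * ln 0]. *)
Definition relent p q : R := if p == 0 then 0 else p * ln (p / q).

Definition abs_cont p q : Prop := [/\ 0 <= p, 0 <= q & q = 0 -> p = 0].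

Lemma relent0p q : relent 0 q = 0.
Proof. by rewrite /relent eqxx. Qed.

Lemma relentpp p : relent p p = 0.
Proof. by rewrite /relent; case: eqVneq => // p0; rewrite divff // ln1 mulr0. Qed.

Lemma relentZ c p q : 0 <= c -> relent (c * p) (c * q) = c * relent p q.
Proof.
move=> c0; rewrite /relent; have [->|cn0] := eqVneq c 0; first by rewrite !mul0r eqxx.
rewrite mulf_eq0 (negbTE cn0) /=; case: eqP => _; first by rewrite mulr0.
by rewrite invfM mulrACA divff // mul1r mulrA.
Qed.

Lemma abs_cont_gt0 p q : abs_cont p q -> p != 0 -> 0 < q.
Proof. by case=> _ q0 qp pn0; rewrite lt_def q0 andbT; apply: contra_neq pn0. Qed.

Lemma relentM p1 q1 p2 q2 : abs_cont p1 q1 -> abs_cont p2 q2 ->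
  relent (p1 * p2) (q1 * q2) = p2 * relent p1 q1 + p1 * relent p2 q2.
Proof.
move=> ac1 ac2.
have [->|p1n0] := eqVneq p1 0; first by rewrite !(mul0r, relent0p, mulr0, addr0).
have [->|p2n0] := eqVneq p2 0; first by rewrite !(mulr0, relent0p, mul0r, addr0).
have p1g0 : 0 < p1 by case: ac1 => p0 _ _; rewrite lt_def p1n0.
have p2g0 : 0 < p2 by case: ac2 => p0 _ _; rewrite lt_def p2n0.
have [q1g0 q2g0] := (abs_cont_gt0 ac1 p1n0, abs_cont_gt0 ac2 p2n0).
rewrite /relent mulf_eq0 (negbTE p1n0) (negbTE p2n0) /= -mulf_div.
by rewrite (@lnM _ (p1 / q1)) ?posrE ?divr_gt0 //; ring.
Qed.

Lemma abs_cont00 : abs_cont 0 0.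
Proof. by split. Qed.

Lemma abs_contpp p : 0 <= p -> abs_cont p p.
Proof. by split. Qed.

Lemma abs_contD p1 q1 p2 q2 : abs_cont p1 q1 -> abs_cont p2 q2 ->
  abs_cont (p1 + p2) (q1 + q2).
Proof.
case=> p10 q10 qp1 [p20 q20 qp2]; split; rewrite ?addr_ge0 // => /eqP.
by rewrite paddr_eq0 // => /andP[/eqP/qp1 -> /eqP/qp2 ->]; rewrite addr0.
Qed.

Lemma abs_contZ c p q : 0 <= c -> abs_cont p q -> abs_cont (c * p) (c * q).
Proof.
move=> c0 [p0 q0 qp]; split; rewrite ?mulr_ge0 // => /eqP.
by rewrite mulf_eq0 => /orP[/eqP ->|/eqP/qp ->]; rewrite ?mul0r ?mulr0.
Qed.

Lemma abs_cont_sum (I : Type) (r : seq I) (p q : I -> R) :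
  (forall i, abs_cont (p i) (q i)) ->
  abs_cont (\sum_(i <- r) p i) (\sum_(i <- r) q i).
Proof.
move=> ac; apply: big_ind2 => [|? ? ? ?|i _].
- exact: abs_cont00.
- exact: abs_contD.
- exact: ac.
Qed.

(* [ln z <= z - 1] at [z = q c / p]. *)
Lemma relent_ge_tangent c p q : 0 < c -> abs_cont p q ->
  p * ln c + p - q * c <= relent p q.
Proof.
move=> c0 ac; have [->|pn0] := eqVneq p 0.
  by case: ac => _ q0 _; rewrite relent0p mul0r !add0r oppr_le0 mulr_ge0 // ltW.
have p0 : 0 < p by case: ac; rewrite lt_def pn0.
have q0 := abs_cont_gt0 ac pn0.
have z0 : 0 < q * c / p by rewrite divr_gt0 // mulr_gt0.
have lnz : ln (q * c / p) <= q * c / p - 1.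
  by have := @le_ln1Dx R (q * c / p - 1); rewrite addrCA subrr addr0; apply; lra.
rewrite ln_div ?lnM ?posrE ?mulr_gt0 // in lnz.
have pz : p * (q * c / p) = q * c by rewrite mulrC divfK.
have := ler_wpM2l (ltW p0) lnz; rewrite [X in _ <= X]mulrBr mulr1 pz.
by rewrite /relent (negbTE pn0) ln_div //; nra.
Qed.

Lemma le_relentD p1 q1 p2 q2 : abs_cont p1 q1 -> abs_cont p2 q2 ->
  relent (p1 + p2) (q1 + q2) <= relent p1 q1 + relent p2 q2.
Proof.
move=> ac1 ac2; have ac := abs_contD ac1 ac2.
have [p0|pn0] := eqVneq (p1 + p2) 0.
  have [-> ->] : p1 = 0 /\ p2 = 0.
    case: ac1 ac2 => [p10 _ _] [p20 _ _].
    by move/eqP: p0; rewrite paddr_eq0 // => /andP[/eqP ? /eqP ?].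
  by rewrite add0r !relent0p addr0.
have q0 := abs_cont_gt0 ac pn0.
set c := (p1 + p2) / (q1 + q2).
have c0 : 0 < c by case: ac => [? _ _]; rewrite divr_gt0 // lt_def pn0.
have qc : (q1 + q2) * c = p1 + p2 by rewrite mulrC divfK ?gt_eqF.
have -> : relent (p1 + p2) (q1 + q2) = (p1 + p2) * ln c by rewrite /relent (negbTE pn0).
have := lerD (relent_ge_tangent c0 ac1) (relent_ge_tangent c0 ac2).
nra.
Qed.

Lemma le_relent_sum (I : Type) (r : seq I) (p q : I -> R) :
  (forall i, abs_cont (p i) (q i)) ->
  relent (\sum_(i <- r) p i) (\sum_(i <- r) q i) <= \sum_(i <- r) relent (p i) (q i).
Proof.
move=> ac; elim: r => [|i r IH]; first by rewrite !big_nil relent0p.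
rewrite !big_cons; apply: le_trans (le_relentD (ac i) (abs_cont_sum r ac)) _.
exact: lerD.
Qed.

End RelativeEntropyTerm.

Section Occupancy.
Variables (R : realType) (X A : finType) (P : X -> A -> X -> R) (gamma : R)
  (nu0 : X -> R) (pi : X -> A -> R).
Hypotheses (P_dist : forall x a, is_dist (P x a)) (gamma01 : 0 < gamma < 1)
  (nu0_dist : is_dist nu0) (pi_dist : forall x, is_dist (pi x)).

Local Notation law := (state_law nu0 P pi).
Local Notation nu := (state_occ gamma nu0 P pi).

Let gamma_gt0 : 0 < gamma. Proof. by case/andP: gamma01. Qed.
Let subr1_gamma_gt0 : 0 < 1 - gamma. Proof. by case/andP: gamma01; rewrite subr_gt0. Qed.

Definition policy_kernel x y : R := \sum_a pi x a * P x a y.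

Lemma policy_step_ge0 x a y : 0 <= pi x a * P x a y.
Proof. by apply: mulr_ge0; [case: (pi_dist x)|case: (P_dist x a)]. Qed.

Lemma policy_kernel_ge0 x y : 0 <= policy_kernel x y.
Proof. by apply: sumr_ge0 => a _; exact: policy_step_ge0. Qed.

Lemma policy_kernel_sum1 x : \sum_y policy_kernel x y = 1.
Proof.
rewrite /policy_kernel exchange_big /= -(pi_dist x).2; apply: eq_bigr => a _.
by rewrite -mulr_sumr (P_dist x a).2 mulr1.
Qed.

Lemma state_lawS t y : law t.+1 y = \sum_x law t x * policy_kernel x y.
Proof. by []. Qed.

Lemma state_law_ge0 t y : 0 <= law t y.
Proof.
elim: t y => [|t IH] y; first by case: nu0_dist.
by rewrite state_lawS; apply: sumr_ge0 => x _; rewrite mulr_ge0 ?policy_kernel_ge0.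
Qed.

Lemma state_lawS_neq0 t y : law t.+1 y != 0 <->
  exists x a, [/\ law t x != 0, pi x a != 0 & P x a y != 0].
Proof.
rewrite state_lawS psumr_neq0E => [|x]; last first.
  by rewrite mulr_ge0 ?state_law_ge0 ?policy_kernel_ge0.
split=> [/existsP[x]|[x [a [lawx pixa Pxay]]]].
  rewrite mulf_eq0 negb_or /policy_kernel psumr_neq0E; last first.
    by move=> a; exact: policy_step_ge0.
  case/andP=> lawx /existsP[a].
  by rewrite mulf_eq0 negb_or => /andP[pixa Pxay]; exists x, a.
apply/existsP; exists x.
rewrite mulf_neq0 // /policy_kernel psumr_neq0E; last by move=> b; exact: policy_step_ge0.
by apply/existsP; exists a; rewrite mulf_neq0.
Qed.

Lemma state_law_sum1 t : \sum_y law t y = 1.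
Proof.
elim: t => [|t IH]; first by case: nu0_dist.
under eq_bigr do rewrite state_lawS; rewrite exchange_big /= -IH.
by apply: eq_bigr => x _; rewrite -mulr_sumr policy_kernel_sum1 mulr1.
Qed.

Lemma state_law_le1 t y : law t y <= 1.
Proof.
rewrite -(state_law_sum1 t) (bigD1 y) //= lerDl.
by apply: sumr_ge0 => z _; exact: state_law_ge0.
Qed.

Definition disc_law y : R ^nat := fun t => gamma ^+ t * law t y.

Lemma disc_law_ge0 y t : 0 <= disc_law y t.
Proof. by rewrite mulr_ge0 ?exprn_ge0 ?state_law_ge0 ?ltW. Qed.

Lemma is_cvg_series_disc_law y : cvgn (series (disc_law y)).
Proof.
apply: (@series_le_cvg _ _ (geometric 1 gamma)) => [t|t|t|].
- exact: disc_law_ge0.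
- by rewrite /geometric /= mul1r exprn_ge0 ?ltW.
- rewrite /geometric /disc_law /= mul1r.
  by apply: ler_piMr; [exact/exprn_ge0/ltW|exact: state_law_le1].
- by apply: is_cvg_geometric_series; rewrite ger0_norm ?ltW //; case/andP: gamma01.
Qed.

Lemma series_disc_lawS y n : series (disc_law y) n.+1 =
  nu0 y + gamma * \sum_x series (disc_law x) n * policy_kernel x y.
Proof.
rewrite /series /= big_nat_recl //= /disc_law expr0 mul1r; congr (_ + _).
rewrite mulr_sumr; under [RHS]eq_bigr do rewrite mulr_suml mulr_sumr.
rewrite [RHS]exchange_big /=; apply: eq_bigr => t _.
rewrite mulr_sumr; apply: eq_bigr => x _.
by rewrite /policy_kernel exprS; ring.
Qed.

Lemma lim_series_disc_law y : limn (series (disc_law y)) =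
  nu0 y + gamma * \sum_x limn (series (disc_law x)) * policy_kernel x y.
Proof.
apply: norm_cvg_lim; rewrite -cvg_shiftS /=.
under eq_fun do rewrite series_disc_lawS.
apply: cvgD; first exact: cvg_cst.
apply: cvgM; first exact: cvg_cst.
apply: cvg_big; first exact: add_continuous.
by move=> x _; apply: cvgM; [exact: is_cvg_series_disc_law|exact: cvg_cst].
Qed.

Lemma state_occ_ge0 y : 0 <= nu y.
Proof.
apply: mulr_ge0; first exact: ltW.
apply: limr_ge; first exact: is_cvg_series_disc_law.
by apply: filterE => n; apply: sumr_ge0 => t _; exact: disc_law_ge0.
Qed.

Lemma sa_occ_ge0 xa : 0 <= sa_occ gamma nu0 P pi xa.
Proof. by rewrite mulr_ge0 ?state_occ_ge0 //; case: (pi_dist xa.1). Qed.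

Lemma state_occ_flow y : nu y = (1 - gamma) * nu0 y +
  \sum_(xa : X * A) gamma * P xa.1 xa.2 y * sa_occ gamma nu0 P pi xa.
Proof.
rewrite /state_occ lim_series_disc_law mulrDr; congr (_ + _).
rewrite -(pair_bigA _ (fun x a => gamma * P x a y * sa_occ gamma nu0 P pi (x, a))) /=.
rewrite !mulr_sumr; apply: eq_bigr => x _; rewrite /policy_kernel !mulr_sumr.
by apply: eq_bigr => a _; rewrite /sa_occ /state_occ /=; ring.
Qed.

Lemma state_occ_eq0P y : nu y = 0 <-> forall t, law t y = 0.
Proof.
rewrite /state_occ; split => [|law0].
  move=> /eqP; rewrite mulf_eq0 gt_eqF //= => /eqP lim0 t.
  have ndec : nondecreasing_seq (series (disc_law y)).
    by apply: nondecreasing_series => k _ _; exact: disc_law_ge0.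
  have := nondecreasing_cvgn_le ndec (@is_cvg_series_disc_law y) t.+1.
  have ser0 : 0 <= series (disc_law y) t.
    by apply: sumr_ge0 => k _; exact: disc_law_ge0.
  rewrite seriesSr [limn _]lim0 => disc_le0.
  have : disc_law y t <= 0 by lra.
  rewrite /disc_law pmulr_rle0 ?exprn_gt0 // => law_le0.
  by apply/eqP; rewrite eq_le law_le0 state_law_ge0.
have -> : series (disc_law y) = fun=> 0.
  by apply/funext => n; apply: big1 => t _; rewrite /disc_law law0 mulr0.
suff -> : limn (fun=> 0 : R) = 0 by rewrite mulr0.
by apply: norm_cvg_lim; exact: cvg_cst.
Qed.

End Occupancy.

Section TwoPolicies.
Variables (R : realType) (X A : finType) (P : X -> A -> X -> R) (gamma : R)
  (nu0 : X -> R) (pi pi' : X -> A -> R).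
Hypotheses (P_dist : forall x a, is_dist (P x a)) (gamma01 : 0 < gamma < 1)
  (nu0_dist : is_dist nu0) (pi_dist : forall x, is_dist (pi x))
  (pi'_dist : forall x, is_dist (pi' x)).

Local Notation nu := (state_occ gamma nu0 P pi).
Local Notation nu' := (state_occ gamma nu0 P pi').
Local Notation mu := (sa_occ gamma nu0 P pi).
Local Notation mu' := (sa_occ gamma nu0 P pi').

Hypothesis pi_abs_cont : forall x a, nu x != 0 -> pi' x a = 0 -> pi x a = 0.

Lemma state_law_neq0 t y :
  state_law nu0 P pi t y != 0 -> state_law nu0 P pi' t y != 0.
Proof.
elim: t y => [//|t IH] y.
rewrite !(state_lawS_neq0 P_dist) // => -[x [a [lawx pixa Pxay]]].
exists x, a; split => //; first exact: IH.
have nux : nu x != 0.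
  by apply: contra_neq lawx => /(state_occ_eq0P P_dist gamma01 nu0_dist pi_dist); apply.
by apply: contra_neq pixa; exact: pi_abs_cont.
Qed.

Lemma state_occ_abs_cont y : nu' y = 0 -> nu y = 0.
Proof.
move=> /(state_occ_eq0P P_dist gamma01 nu0_dist pi'_dist) law'0.
apply/(state_occ_eq0P P_dist gamma01 nu0_dist pi_dist) => t; apply/eqP.
by apply: contraTT (introT eqP (law'0 t)); exact: state_law_neq0.
Qed.

Lemma sa_occ_abs_cont xa : abs_cont (mu xa) (mu' xa).
Proof.
case: xa => x a; split; rewrite ?(sa_occ_ge0 P_dist gamma01 nu0_dist) //.
rewrite /sa_occ /= => /eqP; rewrite mulf_eq0.
have [->|nux] := eqVneq (nu x) 0; first by rewrite mul0r.
case/orP=> /eqP; last by move/(pi_abs_cont nux) ->; rewrite mulr0.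
by move/state_occ_abs_cont/eqP; rewrite (negbTE nux).
Qed.

Lemma relent_sa_occ_chain :
  \sum_(xa : X * A) relent (mu xa) (mu' xa) =
  \sum_x relent (nu x) (nu' x) + \sum_x nu x * \sum_a relent (pi x a) (pi' x a).
Proof.
rewrite -(pair_bigA _ (fun x a => relent (mu (x, a)) (mu' (x, a)))) -big_split /=.
apply: eq_bigr => x _; rewrite /sa_occ /=.
have [->|nux] := eqVneq (nu x) 0.
  by rewrite relent0p mul0r add0r big1 // => a _; rewrite mul0r relent0p.
have nu_ac : abs_cont (nu x) (nu' x).
  by split; rewrite ?(state_occ_ge0 P_dist gamma01 nu0_dist) //; exact: state_occ_abs_cont.
have pi_ac a : abs_cont (pi x a) (pi' x a).
  by split; [case: (pi_dist x)|case: (pi'_dist x)|exact: pi_abs_cont].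
under eq_bigr do rewrite relentM //.
by rewrite big_split /= -mulr_suml (pi_dist x).2 mul1r -mulr_sumr.
Qed.

Lemma relent_state_occ_le y : relent (nu y) (nu' y) <=
  \sum_(xa : X * A) gamma * P xa.1 xa.2 y * relent (mu xa) (mu' xa).
Proof.
have w_ge0 (xa : X * A) : 0 <= gamma * P xa.1 xa.2 y.
  by rewrite mulr_ge0 //; [case/andP: gamma01 => /ltW|case: (P_dist xa.1 xa.2)].
have mu_ac xa := abs_contZ (w_ge0 xa) (sa_occ_abs_cont xa).
have restart_ge0 : 0 <= (1 - gamma) * nu0 y.
  by rewrite mulr_ge0 //; [case/andP: gamma01; rewrite subr_ge0 => _ /ltW|case: nu0_dist].
rewrite (state_occ_flow P_dist gamma01 nu0_dist pi_dist).
rewrite (state_occ_flow P_dist gamma01 nu0_dist pi'_dist).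
apply: le_trans (le_relentD (abs_contpp restart_ge0) (abs_cont_sum _ mu_ac)) _.
rewrite relentpp add0r; apply: le_trans (le_relent_sum _ mu_ac) _.
by apply: ler_sum => xa _; rewrite relentZ ?w_ge0.
Qed.

Lemma relent_state_occ_sum_le :
  \sum_y relent (nu y) (nu' y) <= gamma * \sum_(xa : X * A) relent (mu xa) (mu' xa).
Proof.
apply: le_trans (ler_sum _ (fun y _ => relent_state_occ_le y)) _.
rewrite exchange_big mulr_sumr; apply: ler_sum => xa _ /=.
by rewrite -mulr_suml -mulr_sumr (P_dist _ _).2 mulr1.
Qed.

Lemma relent_sa_occ_le : \sum_(xa : X * A) relent (mu xa) (mu' xa) <=
  (1 - gamma)^-1 * \sum_x nu x * \sum_a relent (pi x a) (pi' x a).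
Proof.
have [_ gamma_lt1] := andP gamma01.
rewrite ler_pdivlMl ?subr_gt0 //.
have := relent_state_occ_sum_le; rewrite relent_sa_occ_chain.
lra.
Qed.

End TwoPolicies.

Section ExtendedKL.
Variables (R : realType) (T : finType).
Implicit Types (p q : T -> R).
Local Open Scope ereal_scope.

Lemma kl_termE (a b : R) : (b = 0 -> a = 0)%R -> kl_term a b = (relent a b)%:E.
Proof.
move=> ba; rewrite /kl_term /relent; have [//|an0] := eqVneq a 0%R.
by case: eqP => // /ba /eqP; rewrite (negbTE an0).
Qed.

Lemma KLE p q : (forall t, q t = 0 -> p t = 0)%R ->
  KL p q = (\sum_t relent (p t) (q t))%:E.
Proof.
by move=> qp; rewrite /KL -sumEFin; apply: eq_bigr => t _; exact: kl_termE (qp t).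
Qed.

Lemma kl_term_neqNy (a b : R) : kl_term a b != -oo.
Proof. by rewrite /kl_term; case: ifP => _ //; case: ifP. Qed.

Lemma KL_neqNy p q : KL p q != -oo.
Proof.
rewrite /KL esum_eqNy; apply/existsP => -[t].
by rewrite (negbTE (kl_term_neqNy _ _)) andbF.
Qed.

Lemma KL_eqy p q t : (q t = 0)%R -> (p t != 0)%R -> KL p q = +oo.
Proof.
move=> qt pt; apply/esum_eqyP => [s _|]; first exact: kl_term_neqNy.
by exists t; rewrite mem_index_enum /kl_term (negbTE pt) qt eqxx.
Qed.

Lemma weighted_KL_eqy (U : finType) (w : U -> R) (p q : U -> T -> R) u t :
  (forall u, 0 <= w u)%R -> (w u != 0)%R -> (q u t = 0)%R -> (p u t != 0)%R ->
  \sum_u (w u)%:E * KL (p u) (q u) = +oo.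
Proof.
move=> w_ge0 wu qt pt; apply/esum_eqyP => [v _|].
  by rewrite mule_eq_ninfty (negbTE (KL_neqNy _ _)) andbF /= lte_fin ltNge w_ge0.
exists u; rewrite mem_index_enum (KL_eqy qt pt) gt0_muley // lte_fin.
by rewrite lt_def wu w_ge0.
Qed.

Lemma weighted_KLE (U : finType) (w : U -> R) (p q : U -> T -> R) :
  (forall u t, w u != 0 -> q u t = 0 -> p u t = 0)%R ->
  \sum_u (w u)%:E * KL (p u) (q u) =
  (\sum_u w u * \sum_t relent (p u t) (q u t))%:E.
Proof.
move=> ac; rewrite -sumEFin; apply: eq_bigr => u _.
have [->|wu] := eqVneq (w u) 0%R; first by rewrite mul0e mul0r.
by rewrite KLE ?EFinM // => t; exact: ac.
Qed.

End ExtendedKL.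

Theorem mainTheorem9 (R : realType) (X A : finType)
  (P : X -> A -> X -> R) (gamma : R) (nu0 : X -> R) (pi pi' : X -> A -> R) :
  (forall x a, is_dist (P x a)) ->
  0 < gamma < 1 ->
  is_dist nu0 ->
  (forall x, is_dist (pi x)) ->
  (forall x, is_dist (pi' x)) ->
  (KL (sa_occ gamma nu0 P pi) (sa_occ gamma nu0 P pi')
   <= ((1 - gamma)^-1)%:E * cond_rel_ent gamma nu0 P pi pi')%E.
Proof.
move=> P_dist gamma01 nu0_dist pi_dist pi'_dist.
have nu_ge0 := state_occ_ge0 P_dist gamma01 nu0_dist pi_dist.
have [[x [a [nux pi'xa pixa]]]|pi_ac] := pselect (exists x a,
    [/\ state_occ gamma nu0 P pi x != 0, pi' x a = 0 & pi x a != 0]).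
  rewrite /cond_rel_ent (weighted_KL_eqy nu_ge0 nux pi'xa pixa).
  by rewrite gt0_muley ?leey // lte_fin invr_gt0 subr_gt0; case/andP: gamma01.
have {}pi_ac x a : state_occ gamma nu0 P pi x != 0 -> pi' x a = 0 -> pi x a = 0.
  by move=> nux pi'xa; have [//|pixa] := eqVneq (pi x a) 0; case: pi_ac; exists x, a.
have mu_ac := sa_occ_abs_cont P_dist gamma01 nu0_dist pi_dist pi'_dist pi_ac.
rewrite /cond_rel_ent weighted_KLE // KLE => [|xa]; last by case: (mu_ac xa).
by rewrite -EFinM lee_fin (relent_sa_occ_le P_dist gamma01 nu0_dist pi_dist pi'_dist pi_ac).
Qed.
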